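(* Let $(A,\mu_A,\alpha_A)$, $(B,\mu_B,\alpha_B)$, $(C,\mu_C,\alpha_C)$ be Hom-associative algebras and $R_1:B\otimes A\to A\otimes B$, $R_2:C\otimes B\to B\otimes C$, $R_3:C\otimes A\to A\otimes C$ Hom-twisting maps satisfying $(\mathrm{id}_A\otimes R_2)\circ(R_3\otimes\mathrm{id}_B)\circ(\mathrm{id}_C\otimes R_1)=(R_1\otimes\mathrm{id}_C)\circ(\mathrm{id}_B\otimes R_3)\circ(R_2\otimes\mathrm{id}_A)$. Define $P_1:C\otimes(A\otimes_{R_1}B)\to(A\otimes_{R_1}B)\otimes C$, $P_1=(\mathrm{id}_A\otimes R_2)\circ(R_3\otimes\mathrm{id}_B)$, and $P_2:(B\otimes_{R_2}C)\otimes A\to A\otimes(B\otimes_{R_2}C)$, $P_2=(R_1\otimes\mathrm{id}_C)\circ(\mathrm{id}_B\otimes R_3)$. Then $P_1$ is a Hom-twisting map between $A\otimes_{R_1}B$ and $C$, $P_2$ is a Hom-twisting map between $A$ and $B\otimes_{R_2}C$, and the Hom-associative algebras $(A\otimes_{R_1}B)\otimes_{P_1}C$ and $A\otimes_{P_2}(B\otimes_{R_2}C)$ coincide.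
   Context: Algebras over a field $k$, not assumed unital. A Hom-associative algebra is $(A,\mu,\alpha)$ with $\alpha(aa')=\alpha(a)\alpha(a')$, $\alpha(a)(a'a'')=(aa')\alpha(a'')$. For Hom-associative algebras $(A,\mu_A,\alpha_A),(B,\mu_B,\alpha_B)$, a Hom-twisting map between $A$ and $B$ is a linear $R:B\otimes A\to A\otimes B$ with $(\alpha_A\otimes\alpha_B)\circ R=R\circ(\alpha_B\otimes\alpha_A)$, $R\circ(\alpha_B\otimes\mu_A)=(\mu_A\otimes\alpha_B)\circ(\mathrm{id}_A\otimes R)\circ(R\otimes\mathrm{id}_A)$, $R\circ(\mu_B\otimes\alpha_A)=(\alpha_A\otimes\mu_B)\circ(R\otimes\mathrm{id}_B)\circ(\mathrm{id}_B\otimes R)$. The Hom-twisted tensor product $A\otimes_R B$ is the Hom-associative algebra $A\otimes B$ with product $(\mu_A\otimes\mu_B)\circ(\mathrm{id}_A\otimes R\otimes\mathrm{id}_B)$, i.e. $(a\otimes b)(a'\otimes b')=aa'_R\otimes b_Rb'$ where $R(b\otimes a)=a_R\otimes b_R$, and structure map $\alpha_A\otimes\alpha_B$. *)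

From HB Require Import structures.
From mathcomp Require Import all_boot all_algebra.
From mathcomp Require Import boolp classical_sets functions.
Set Implicit Arguments. Unset Strict Implicit. Unset Printing Implicit Defensive.
Import GRing.Theory.
Local Open Scope ring_scope.

(* Model: U \otimes V is the k-span, inside the space of functions               *)
(*   U^* -> V^* -> k,  of the pure tensors  u \otimes v := (f, g) |-> f u * g v. *)
(* Over a field the canonical map from the abstract tensor product into this *)
(* function space is injective, so this is (isomorphic to) U \otimes V.          *)
Section TensorDef.
Variables (k : fieldType) (U V : lmodType k).

Definition dual (W : lmodType k) := {linear W -> k^o}.

Definition pure_fun (u : U) (v : V) : dual U -> dual V -> k^o :=
  fun f g => f u * g v.

Definition is_tensor (phi : dual U -> dual V -> k^o) : Prop :=
  exists s : seq (U * V), phi = \sum_(p <- s) pure_fun p.1 p.2.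

Definition tensor_pred : {pred dual U -> dual V -> k^o} :=
  fun phi => `[< is_tensor phi >].

Lemma tensor_pred_closed : GRing.subsemimod_closed tensor_pred.
Proof.
split; [split|].
- by apply/asboolP; exists [::]; rewrite big_nil.
- move=> x y /asboolP [s ->] /asboolP [t ->]; apply/asboolP.
  by exists (s ++ t); rewrite big_cat.
- move=> a x /asboolP [s ->]; apply/asboolP.
  exists [seq (a *: p.1, p.2) | p <- s]; rewrite big_map scaler_sumr.
  apply: eq_bigr => p _; apply/funext => f; apply/funext => g.
  by rewrite /pure_fun /= linearZ /= -mulrA.
Qed.

HB.instance Definition _ := GRing.isSubmodClosed.Build k _ tensor_pred
  tensor_pred_closed.

Record tensor_type := Tensor {
  tensor_val : dual U -> dual V -> k^o;
  tensor_valP : tensor_val \in tensor_pred }.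

HB.instance Definition _ := [isSub for tensor_val].
HB.instance Definition _ := [Choice of tensor_type by <:].
HB.instance Definition _ := [SubChoice_isSubLmodule of tensor_type by <:].

Definition tensor : lmodType k := tensor_type.

Lemma pure_tensor_subproof (u : U) (v : V) : pure_fun u v \in tensor_pred.
Proof. by apply/asboolP; exists [:: (u, v)]; rewrite big_seq1. Qed.

Definition tens (u : U) (v : V) : tensor := Tensor (pure_tensor_subproof u v).

Lemma tensor_repr_subproof (x : tensor) :
  exists s : seq (U * V), x = \sum_(p <- s) tens p.1 p.2.
Proof.
case: x => phi Hphi; have /asboolP [s e] := Hphi.
exists s; apply: val_inj => /=.
rewrite e {e Hphi}; elim: s => [|p s IH]; first by rewrite !big_nil.
by rewrite !big_cons IH.
Qed.

Definition trepr (x : tensor) : seq (U * V) :=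
  projT1 (cid (tensor_repr_subproof x)).

(* The linear map U \otimes V -> W induced by a (bilinear) map U -> V -> W,
   defined on a representative; it is independent of the representative
   whenever f is bilinear, which is the only case used below. *)
Definition tlift (W : zmodType) (f : U -> V -> W) (x : tensor) : W :=
  \sum_(p <- trepr x) f p.1 p.2.

End TensorDef.

Arguments tensor {k} U V.
Arguments tens {k U V}.
Arguments tlift {k U V W}.

Notation "U '\otimes' V" := (tensor U V) (at level 40, left associativity).
Notation "u '\ot' v" := (tens u v) (at level 40, left associativity).

Section TensorOps.
Variable k : fieldType.

Definition tmap (U V U' V' : lmodType k) (f : U -> U') (g : V -> V') :
  U \otimes V -> U' \otimes V' := tlift (fun u v => f u \ot g v).

Definition tassoc (U V W : lmodType k) : (U \otimes V) \otimes W -> U \otimes (V \otimes W) :=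
  tlift (fun t w => tlift (fun u v => u \ot (v \ot w)) t).

Definition tassocV (U V W : lmodType k) : U \otimes (V \otimes W) -> (U \otimes V) \otimes W :=
  tlift (fun u t => tlift (fun v w => (u \ot v) \ot w) t).

Definition tmul (A : lmodType k) (mul : A -> A -> A) : A \otimes A -> A :=
  tlift mul.

End TensorOps.

Arguments tassoc {k U V W}.
Arguments tassocV {k U V W}.

Section HomAlg.
Variable k : fieldType.

(* (A, mul, alpha) is a (not necessarily unital) Hom-associative algebra:
   mul is bilinear (i.e. a linear map A \otimes A -> A), alpha is linear,
   alpha is multiplicative and the Hom-associativity law holds. *)
Definition HomAssoc (A : lmodType k) (mul : A -> A -> A) (alpha : A -> A) : Prop :=
  [/\ (forall a, linear (mul a)), (forall b, linear (mul ^~ b)),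
      linear alpha,
      (forall a a', alpha (mul a a') = mul (alpha a) (alpha a')) &
      (forall a a' a'', mul (alpha a) (mul a' a'') = mul (mul a a') (alpha a''))].

(* Triple tensor products are bracketed explicitly, the
   canonical associativity isomorphisms being inserted where needed. *)
Definition HomTwisting (A B : lmodType k) (muA : A -> A -> A) (alA : A -> A)
    (muB : B -> B -> B) (alB : B -> B) (R : B \otimes A -> A \otimes B) : Prop :=
  [/\ linear R,
      tmap alA alB \o R = R \o tmap alB alA,
      R \o tmap alB (tmul muA)
        = tmap (tmul muA) alB \o tassocV \o tmap id R \o tassoc
            \o tmap R id \o tassocV &
      R \o tmap (tmul muB) alA
        = tmap alA (tmul muB) \o tassoc \o tmap R id \o tassocV
            \o tmap id R \o tassoc].

(* multiplication of the Hom-twisted tensor product A \otimes_R B: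
   (a \otimes b)(a' \otimes b') = a a'_R \otimes b_R b'  where R(b \otimes a') = a'_R \otimes b_R *)
Definition twisted_mul (A B : lmodType k) (muA : A -> A -> A)
    (muB : B -> B -> B) (R : B \otimes A -> A \otimes B) (x y : A \otimes B) : A \otimes B :=
  tlift (fun a b => tlift (fun a' b' =>
     tmap (muA a) (muB ^~ b') (R (b \ot a'))) y) x.

Definition twisted_alpha (A B : lmodType k) (alA : A -> A) (alB : B -> B) :
  A \otimes B -> A \otimes B := tmap alA alB.

End HomAlg.

(* A bilinear map F : U -> V -> W induces a linear map [tlift F] on U (x) V,
   modelled as the span of pure tensors among the bilinear forms on the duals:
   a vanishing sum of pure tensors is reduced to the empty sum by eliminating
   linearly dependent first factors, a linear form (obtained by Zorn's lemma)
   showing that the remaining second factors vanish.  Through [tlift] every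
   map of the statement is computed on pure tensors, and each Hom-twisting
   axiom becomes a rewrite rule expanding, e.g., R (alB b (x) muA a a') into an
   iterated sum over R, in Sweedler style.  The twisting laws of P1 and P2 and
   the identification of the two iterated twisted products then amount to
   reordering iterated sums; the braid relation between R1, R2 and R3 is used
   exactly in the two laws involving the product of both twisted factors. *)

From HB Require Import structures.
From mathcomp Require Import all_boot all_algebra.
From mathcomp Require Import boolp classical_sets.
From Corelib Require Import Setoid Morphisms.
Set Implicit Arguments. Unset Strict Implicit. Unset Printing Implicit Defensive.
Import GRing.Theory.
Local Open Scope ring_scope.

Section LinearSeparation.
Variables (k : fieldType) (U : lmodType k).
Local Open Scope classical_set_scope.

Definition in_span n (w : 'I_n -> U) (x : U) :=
  exists c : 'I_n -> k, x = \sum_i c i *: w i.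

Definition avoiding_subspace n (w : 'I_n -> U) (u : U) (M : set U) :=
  [/\ forall a x y, M x -> M y -> M (a *: x + y), M 0,
      forall i, M (w i) & ~ M u].

Lemma span_avoiding n (w : 'I_n -> U) u :
  ~ in_span w u -> avoiding_subspace w u (in_span w).
Proof.
move=> nsu; split => //.
- move=> a x y [c ->] [d ->]; exists (fun i => a * c i + d i).
  rewrite scaler_sumr -big_split /=; apply: eq_bigr => i _.
  by rewrite scalerDl scalerA.
- by exists (fun=> 0); rewrite big1 // => i _; rewrite scale0r.
- move=> i; exists (fun j => (j == i)%:R).
  rewrite (bigD1 i) //= eqxx scale1r big1 ?addr0 // => j /negPf ->.
  by rewrite scale0r.
Qed.

(* [Zorn_bigcup] also feeds the empty chain, whose union [set0] is not a
   subspace; hence the disjunct [M = set0]. *)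
Lemma maximal_avoiding_subspace n (w : 'I_n -> U) u : ~ in_span w u ->
  exists M, avoiding_subspace w u M /\
    forall N, M `<` N -> ~ avoiding_subspace w u N.
Proof.
move=> nsu; pose P M := M = set0 \/ avoiding_subspace w u M.
have avP M x : P M -> M x -> avoiding_subspace w u M by case=> [->|].
have [M [PM maxM]] : exists M, P M /\ forall N, M `<` N -> ~ P N.
  apply: Zorn_bigcup => F FP Ftot.
  have [[X0 FX0 [x0 X0x0]]|none] := pselect (exists2 X, F X & exists x, X x).
  - right; have [_ X00 X0w _] := avP _ _ (FP _ FX0) X0x0.
    split; [|by exists X0|by move=> i; exists X0|].
    + move=> a x y [X1 FX1 X1x] [X2 FX2 X2y].
      have [s12|s21] := Ftot _ _ FX1 FX2.
      * have [cl _ _ _] := avP _ _ (FP _ FX2) X2y.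
        by exists X2 => //; apply: cl => //; apply: s12.
      * have [cl _ _ _] := avP _ _ (FP _ FX1) X1x.
        by exists X1 => //; apply: cl => //; apply: s21.
    + by move=> [X FX Xu]; have [] := avP _ _ (FP _ FX) Xu.
  - left; apply/seteqP; split => // x [X FX Xx].
    by exfalso; apply: none; exists X => //; exists x.
exists M; split=> [|N ltMN avN]; last by apply: (maxM N) => //; right.
case: PM => // M0; exfalso; apply: (maxM (in_span w)); last first.
  by right; apply: span_avoiding.
have [_ span0 _ _] := span_avoiding nsu.
by rewrite M0; split; [exact: sub0set | move/(_ 0 span0)].
Qed.

Section MaximalAvoiding.
Variables (n : nat) (w : 'I_n -> U) (u : U) (M : set U).
Hypotheses (avM : avoiding_subspace w u M)
  (maxM : forall N, M `<` N -> ~ avoiding_subspace w u N).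

Lemma avoidingZ a x : M x -> M (a *: x).
Proof. by case: avM => cl M0 _ _ Mx; rewrite -[_ *: _]addr0; apply: cl. Qed.

Lemma avoidingB x y : M x -> M y -> M (x - y).
Proof.
by case: avM => cl _ _ _ Mx My; rewrite addrC -scaleN1r; apply: cl.
Qed.

(* Maximality makes [M] a hyperplane complementary to the line through [u]. *)
Lemma avoiding_hyperplane x : exists c : k, M (x - c *: u).
Proof.
case: (avM) => cl M0 Mw Mu.
have [Mx|nMx] := pselect (M x); first by exists 0; rewrite scale0r subr0.
pose N := [set y | exists m c, M m /\ y = m + c *: x].
have [[m [c [Mm ue]]]|nNu] := pselect (N u).
  have [c0|cn0] := eqVneq c 0.
    by exfalso; apply: Mu; rewrite ue c0 scale0r addr0.
  exists c^-1; have -> : x - c^-1 *: u = c^-1 *: (- m).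
    rewrite ue scalerDr scalerA mulVf // scale1r scalerN opprD addrA.
    by rewrite addrAC subrr add0r.
  by apply: avoidingZ; rewrite -scaleN1r; apply: avoidingZ.
exfalso; apply: (maxM (N := N)).
  split; first by move=> y My; exists y, 0; rewrite scale0r addr0.
  move=> MN; apply: nMx; apply: MN.
  by exists 0, 1; rewrite scale1r add0r.
split => //.
- move=> a y z [m1 [c1 [Mm1 ->]]] [m2 [c2 [Mm2 ->]]].
  exists (a *: m1 + m2), (a * c1 + c2); split; first exact: cl.
  by rewrite scalerDr scalerDl scalerA addrACA.
- by exists 0, 0; rewrite scale0r addr0.
- by move=> i; exists (w i), 0; rewrite scale0r addr0.
Qed.

Lemma avoiding_hyperplane_coef_unique x c1 c2 :
  M (x - c1 *: u) -> M (x - c2 *: u) -> c1 = c2.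
Proof.
case: (avM) => _ _ _ Mu h1 h2; apply/eqP; apply/negPn/negP => ne.
have := avoidingB h2 h1.
rewrite opprB addrA addrAC [x - _ - x]addrAC subrr add0r addrC -scalerBl.
by move/(avoidingZ (c1 - c2)^-1); rewrite scalerA mulVf ?scale1r ?subr_eq0.
Qed.

End MaximalAvoiding.

Lemma linear_separation n (w : 'I_n -> U) (u : U) : ~ in_span w u ->
  exists f : U -> k^o, [/\ linear f, forall i, f (w i) = 0 & f u = 1].
Proof.
move=> nsu; have [M [avM maxM]] := maximal_avoiding_subspace nsu.
have [cl _ Mw _] := avM.
pose f x := projT1 (cid (avoiding_hyperplane avM maxM x)).
have fP x : M (x - f x *: u) by rewrite /f; case: cid.
have coef_uniq := avoiding_hyperplane_coef_unique avM.
exists f; split.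
- move=> a x y; apply: (coef_uniq (a *: x + y)); first exact: fP.
  have -> : a *: x + y - (a * f x + f y) *: u
          = a *: (x - f x *: u) + (y - f y *: u).
    by rewrite scalerDl scalerBr scalerA opprD addrACA.
  exact: cl (fP x) (fP y).
- by move=> i; apply: (coef_uniq (w i)); rewrite ?scale0r ?subr0.
- by apply: (coef_uniq u); rewrite ?scale1r ?subrr //; case: (avM).
Qed.

End LinearSeparation.

Section LinearMaps.
Variable k : fieldType.
Implicit Types U V W : lmodType k.

Lemma linD U V (f : U -> V) : linear f -> forall x y, f (x + y) = f x + f y.
Proof. by move=> hf x y; have := hf 1 x y; rewrite !scale1r. Qed.

Lemma lin0 U V (f : U -> V) : linear f -> f 0 = 0.
Proof. by move=> hf; apply/(addrI (f 0)); rewrite -linD // !addr0. Qed.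

Lemma linZ U V (f : U -> V) : linear f -> forall a x, f (a *: x) = a *: f x.
Proof. by move=> hf a x; rewrite -[a *: x]addr0 hf lin0 // addr0. Qed.

Lemma linN U V (f : U -> V) : linear f -> forall x, f (- x) = - f x.
Proof. by move=> hf x; rewrite -scaleN1r linZ // scaleN1r. Qed.

Lemma lin_sum U V (f : U -> V) : linear f ->
  forall I (r : seq I) (P : pred I) (h : I -> U),
  f (\sum_(i <- r | P i) h i) = \sum_(i <- r | P i) f (h i).
Proof.
move=> hf I r P h; elim: r => [|i r IH]; first by rewrite !big_nil lin0.
by rewrite !big_cons; case: (P i); rewrite ?linD ?IH.
Qed.

Lemma lin_id U : linear (@id U).
Proof. by []. Qed.

Lemma lin_comp U V W (f : V -> W) (g : U -> V) :
  linear f -> linear g -> linear (fun x => f (g x)).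
Proof. by move=> hf hg a x y; rewrite hg hf. Qed.

Lemma lin_sumf U V I (r : seq I) (h : I -> U -> V) :
  (forall i, linear (h i)) -> linear (fun x => \sum_(i <- r) h i x).
Proof.
move=> hh a x y; elim: r => [|i r IH]; first by rewrite !big_nil scaler0 addr0.
by rewrite !big_cons IH hh scalerDr addrACA.
Qed.

Definition bilin U V W (F : U -> V -> W) :=
  (forall u, linear (F u)) /\ (forall v, linear (F ^~ v)).

End LinearMaps.

Arguments lin_id {k U}.

Section ToDual.
Variables (k : fieldType) (U : lmodType k) (f : U -> k^o).
Definition to_dual (hf : linear f) := f.
HB.instance Definition _ (hf : linear f) :=
  GRing.isLinear.Build k U k^o *:%R (to_dual hf) hf.
End ToDual.

Section TensorLift.
Variables (k : fieldType) (U V : lmodType k).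

Lemma tensor_decomp (x : U \otimes V) :
  exists s : seq (U * V), x = \sum_(p <- s) p.1 \ot p.2.
Proof. exact: tensor_repr_subproof. Qed.

Lemma dual_separates (v : V) : (forall g : dual V, g v = 0) -> v = 0.
Proof.
move=> h; apply/eqP/negPn/negP => nv.
have nsp : ~ in_span (fun i : 'I_0 => v) v.
  by move=> [c]; rewrite big_ord0 => /eqP; rewrite (negPf nv).
have [f [hf _ fv]] := linear_separation nsp.
by have /eqP := h (to_dual hf); rewrite /= /to_dual fv oner_eq0.
Qed.

Lemma tens_bilin : bilin (@tens k U V).
Proof.
split=> [u|v] a x y; apply: val_inj; apply/funext => f; apply/funext => g.
- rewrite /= /pure_fun /= linearP -[RHS]/(a * (f u * g x) + f u * g y).
  by rewrite mulrDr mulrCA.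
- rewrite /= /pure_fun /= linearP -[RHS]/(a * (f x * g v) + f y * g v).
  by rewrite mulrDl mulrA.
Qed.

Lemma tens_linl (v : V) : linear (fun u : U => u \ot v).
Proof. exact: tens_bilin.2. Qed.

Lemma tens_linr (u : U) : linear (fun v : V => u \ot v).
Proof. exact: tens_bilin.1. Qed.

Lemma tensor_val_sum n (us : 'I_n -> U) (vs : 'I_n -> V) f g :
  tensor_val (\sum_i us i \ot vs i) f g = \sum_i f (us i) * g (vs i).
Proof.
elim: n us vs => [|n IH] us vs; first by rewrite !big_ord0.
by rewrite !big_ord_recl -IH.
Qed.

Lemma sum_bilin_reduce (W : lmodType k) (F : U -> V -> W) n
    (us : 'I_n.+1 -> U) (vs : 'I_n.+1 -> V) (c : 'I_n -> k) : bilin F ->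
  us ord0 = \sum_i c i *: us (lift ord0 i) ->
  \sum_i F (us i) (vs i) =
  \sum_(i < n) F (us (lift ord0 i)) (vs (lift ord0 i) + c i *: vs ord0).
Proof.
move=> [F1 F2] e; rewrite big_ord_recl e (lin_sum (F2 _)) -big_split /=.
apply: eq_bigr => i _.
by rewrite (linZ (F2 _)) (linD (F1 _)) (linZ (F1 _)) addrC.
Qed.

(* Induction on [n]: either [us 0] depends linearly on the other [us i] and
   is eliminated, or a linear form separates it, which forces [vs 0 = 0]. *)
Lemma sum_bilin_eq0 (W : lmodType k) (F : U -> V -> W) : bilin F ->
  forall n (us : 'I_n -> U) (vs : 'I_n -> V),
  \sum_i us i \ot vs i = 0 -> \sum_i F (us i) (vs i) = 0.
Proof.
move=> bF; elim=> [|n IH] us vs; first by rewrite !big_ord0.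
move=> e0.
have [[c sp]|nsp] := pselect (in_span (fun i : 'I_n => us (lift ord0 i)) (us ord0)).
  rewrite (sum_bilin_reduce _ bF sp); apply: IH.
  by rewrite -(sum_bilin_reduce _ tens_bilin sp).
have [f [hf f0 f1]] := linear_separation nsp.
have v0 : vs ord0 = 0.
  apply: dual_separates => g.
  have := congr1 (fun t => tensor_val t (to_dual hf) g) e0.
  rewrite tensor_val_sum big_ord_recl /= /to_dual f1 mul1r big1 ?addr0 //.
  by move=> i _; rewrite f0 mul0r.
move: e0; rewrite !big_ord_recl v0 (lin0 (tens_linr _)) (lin0 (bF.1 _)) !add0r.
exact: IH.
Qed.

Lemma seq_sum_bilin_eq0 (W : lmodType k) (F : U -> V -> W) : bilin F ->
  forall s : seq (U * V),
  \sum_(p <- s) p.1 \ot p.2 = 0 -> \sum_(p <- s) F p.1 p.2 = 0.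
Proof.
by move=> bF s; rewrite !(big_nth (0, 0)) !big_mkord; apply: sum_bilin_eq0.
Qed.

Lemma tlift_sum (W : lmodType k) (F : U -> V -> W) : bilin F ->
  forall s : seq (U * V),
  tlift F (\sum_(p <- s) p.1 \ot p.2) = \sum_(p <- s) F p.1 p.2.
Proof.
move=> bF s; rewrite /tlift /trepr; case: cid => r /= e.
apply/eqP; rewrite -subr_eq0; apply/eqP.
have sum_catN (X : lmodType k) (G : U -> V -> X) : (forall u v, G (- u) v = - G u v) ->
    \sum_(p <- r ++ [seq (- p.1, p.2) | p <- s]) G p.1 p.2
    = \sum_(p <- r) G p.1 p.2 - \sum_(p <- s) G p.1 p.2.
  move=> GN; rewrite big_cat big_map /=.
  by under [X in _ + X]eq_bigr do rewrite GN; rewrite sumrN.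
rewrite -sum_catN => [|u v]; last exact: (linN (bF.2 _)).
apply: (seq_sum_bilin_eq0 bF).
by rewrite (sum_catN _ _ (fun u v => linN (tens_linl v) u)) e subrr.
Qed.

Lemma tliftE (W : lmodType k) (F : U -> V -> W) : bilin F ->
  forall u v, tlift F (u \ot v) = F u v.
Proof. by move=> bF u v; have := tlift_sum bF [:: (u, v)]; rewrite !big_seq1. Qed.

Lemma tlift_linear (W : lmodType k) (F : U -> V -> W) :
  bilin F -> linear (tlift F).
Proof.
move=> bF a x y.
have [r ->] := tensor_decomp x; have [s ->] := tensor_decomp y.
have -> : a *: \sum_(p <- r) p.1 \ot p.2 + \sum_(p <- s) p.1 \ot p.2
  = \sum_(p <- [seq (a *: q.1, q.2) | q <- r] ++ s) p.1 \ot p.2.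
  rewrite big_cat big_map scaler_sumr; congr (_ + _).
  by apply: eq_bigr => p _; rewrite (linZ (tens_linl _)).
rewrite !tlift_sum // big_cat big_map scaler_sumr; congr (_ + _).
by apply: eq_bigr => p _; rewrite (linZ (bF.2 _)).
Qed.

Lemma tlift_tens (t : U \otimes V) : tlift tens t = t.
Proof. by rewrite /tlift /trepr; case: cid. Qed.

Lemma linear_tlift (W W' : lmodType k) (g : W -> W') : linear g ->
  forall (F : U -> V -> W) t, g (tlift F t) = tlift (fun u v => g (F u v)) t.
Proof. by move=> hg F t; rewrite /tlift (lin_sum hg). Qed.

Lemma tlift_linear_param (W W' : lmodType k) (F : W -> U -> V -> W') t :
  (forall u v, linear (fun w => F w u v)) -> linear (fun w => tlift (F w) t).
Proof. by move=> h; apply: lin_sumf => p; apply: h. Qed.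

Lemma tensor_ext (W : lmodType k) (f g : U \otimes V -> W) :
  linear f -> linear g -> (forall u v, f (u \ot v) = g (u \ot v)) ->
  forall x, f x = g x.
Proof.
move=> hf hg e x; have [r ->] := tensor_decomp x.
by rewrite (lin_sum hf) (lin_sum hg); apply: eq_bigr => p _; apply: e.
Qed.

Lemma tlift_ext (W : lmodType k) (F G : U -> V -> W) t :
  (forall u v, F u v = G u v) -> tlift F t = tlift G t.
Proof. by move=> e; apply: eq_bigr => p _; rewrite e. Qed.

Lemma tlift_exchange (W U' V' : lmodType k) (F : U -> V -> U' -> V' -> W) t s :
  tlift (fun u v => tlift (F u v) s) t =
  tlift (fun u' v' => tlift (fun u v => F u v u' v') t) s.
Proof. exact: exchange_big. Qed.

End TensorLift.

#[global] Instance tlift_proper (k : fieldType) (U V : lmodType k) (W : zmodType) :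
  Proper (pointwise_relation U (pointwise_relation V eq) ==> eq ==> eq)
    (@tlift k U V W).
Proof. by move=> F G e t _ <-; apply: eq_bigr => p _; apply: e. Qed.

Section TensorMaps.
Variable k : fieldType.
Implicit Types U V W X Y : lmodType k.

Lemma tlift_tlift U V X Y W (K : X -> Y -> W) :
  bilin K -> forall (G : U -> V -> X \otimes Y) t,
  tlift K (tlift G t) = tlift (fun u v => tlift K (G u v)) t.
Proof. by move=> bK; apply: linear_tlift; apply: tlift_linear. Qed.

Lemma tmap_bilin U V X Y (f : U -> X) (g : V -> Y) :
  linear f -> linear g -> bilin (fun u v => f u \ot g v).
Proof.
move=> hf hg; split => [u|v].
- exact: lin_comp (tens_linr _) hg.
- exact: lin_comp (tens_linl _) hf.
Qed.

Lemma tmapE U V X Y (f : U -> X) (g : V -> Y) : linear f -> linear g ->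
  forall u v, tmap f g (u \ot v) = f u \ot g v.
Proof. by move=> hf hg; apply: tliftE; apply: tmap_bilin. Qed.

Lemma tmap_linear U V X Y (f : U -> X) (g : V -> Y) :
  linear f -> linear g -> linear (tmap f g).
Proof. by move=> hf hg; apply: tlift_linear; apply: tmap_bilin. Qed.

Lemma tmul_linear U (mu : U -> U -> U) : bilin mu -> linear (tmul mu).
Proof. exact: tlift_linear. Qed.

Lemma tmulE U (mu : U -> U -> U) : bilin mu ->
  forall a b, tmul mu (a \ot b) = mu a b.
Proof. exact: tliftE. Qed.

Lemma tassoc_bilin U V W :
  bilin (fun (t : U \otimes V) (w : W) => tlift (fun u v => u \ot (v \ot w)) t).
Proof.
split => [t|w].
- apply: tlift_linear_param => u v; exact: lin_comp (tens_linr _) (tens_linr _).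
- apply: tlift_linear; split => [u|v].
  + exact: lin_comp (tens_linr _) (tens_linl _).
  + exact: tens_linl.
Qed.

Lemma tassocV_bilin U V W :
  bilin (fun (u : U) (t : V \otimes W) => tlift (fun v w => (u \ot v) \ot w) t).
Proof.
split => [u|t].
- apply: tlift_linear; split => [v|w].
  + exact: tens_linr.
  + exact: lin_comp (tens_linl _) (tens_linr _).
- apply: tlift_linear_param => v w; exact: lin_comp (tens_linl _) (tens_linl _).
Qed.

Lemma tassoc_linear U V W : linear (@tassoc k U V W).
Proof. exact: tlift_linear (tassoc_bilin U V W). Qed.

Lemma tassocV_linear U V W : linear (@tassocV k U V W).
Proof. exact: tlift_linear (tassocV_bilin U V W). Qed.

Lemma tassocE U V W (t : U \otimes V) (w : W) :
  tassoc (t \ot w) = tlift (fun u v => u \ot (v \ot w)) t.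
Proof. exact: tliftE (tassoc_bilin U V W) t w. Qed.

Lemma tassocVE U V W (u : U) (t : V \otimes W) :
  tassocV (u \ot t) = tlift (fun v w => (u \ot v) \ot w) t.
Proof. exact: tliftE (tassocV_bilin U V W) u t. Qed.

Lemma tassocE3 U V W (u : U) (v : V) (w : W) :
  tassoc ((u \ot v) \ot w) = u \ot (v \ot w).
Proof.
rewrite tassocE tliftE //; split => [x|y].
- exact: lin_comp (tens_linr _) (tens_linl _).
- exact: tens_linl.
Qed.

Lemma tassocVE3 U V W (u : U) (v : V) (w : W) :
  tassocV (u \ot (v \ot w)) = (u \ot v) \ot w.
Proof.
rewrite tassocVE tliftE //; split => [x|y].
- exact: tens_linr.
- exact: lin_comp (tens_linl _) (tens_linr _).
Qed.

End TensorMaps.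

Arguments tassoc_linear {k U V W}.
Arguments tassocV_linear {k U V W}.

Section LinearityRules.
Variable k : fieldType.
Implicit Types U V W X Y : lmodType k.

Lemma lin_comp_fst U V W X (h : V -> W -> X) (w : W) (g : U -> V) :
  linear (h ^~ w) -> linear g -> linear (fun x => h (g x) w).
Proof. exact: lin_comp. Qed.

End LinearityRules.

Ltac linearity := cbv beta; first
  [ exact: lin_id
  | apply: tens_linl
  | apply: tens_linr
  | apply: tassoc_linear
  | apply: tassocV_linear
  | match goal with
    | H : linear _ |- _ => apply: H
    | H : forall _, linear _ |- _ => apply: H
    | H : bilin _ |- _ => apply: (H.1)
    | H : bilin _ |- _ => apply: (H.2)
    end
  | apply: tmap_linear; linearity
  | apply: tlift_linear; bilinearity
  | apply: tlift_linear_param; intros; linearity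
  | apply: lin_comp;
      (* refuse the useless factorisation with [g := id], which would loop *)
      [ | lazymatch goal with |- linear (fun x => x) => fail | _ => idtac end];
      linearity
  | apply: lin_comp_fst; linearity ]
with bilinearity := split; intro; linearity.

Section TensorExt3.
Variables (k : fieldType) (U V W X : lmodType k).

Lemma tensor_ext3l (f g : (U \otimes V) \otimes W -> X) : linear f -> linear g ->
  (forall u v w, f ((u \ot v) \ot w) = g ((u \ot v) \ot w)) -> f =1 g.
Proof.
move=> hf hg e; apply: tensor_ext => // t w.
by apply: (tensor_ext (f := fun t => f (t \ot w)) (g := fun t => g (t \ot w)));
  try linearity.
Qed.

Lemma tensor_ext3r (f g : U \otimes (V \otimes W) -> X) : linear f -> linear g ->
  (forall u v w, f (u \ot (v \ot w)) = g (u \ot (v \ot w))) -> f =1 g.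
Proof.
move=> hf hg e; apply: tensor_ext => // u t.
by apply: (tensor_ext (f := fun t => f (u \ot t)) (g := fun t => g (u \ot t)));
  try linearity.
Qed.

End TensorExt3.

Section HomTwistingLaws.
Variables (k : fieldType) (A B : lmodType k).
Variables (muA : A -> A -> A) (alA : A -> A) (muB : B -> B -> B) (alB : B -> B).
Variable R : B \otimes A -> A \otimes B.
Hypotheses (bA : bilin muA) (bB : bilin muB) (hA : linear alA) (hB : linear alB).
Hypothesis hR : linear R.

Let hmA : linear (tmul muA). Proof. exact: tmul_linear. Qed.
Let hmB : linear (tmul muB). Proof. exact: tmul_linear. Qed.

Lemma twisting_mulA_rhsE b a a' :
  tmap (tmul muA) alB
    (tassocV (tmap id R (tassoc (tmap R id (tassocV (b \ot (a \ot a')))))))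
  = tlift (fun u v => tlift (fun x y => muA u x \ot alB y) (R (v \ot a')))
      (R (b \ot a)).
Proof.
rewrite tassocVE3 tmapE // tassocE.
rewrite (linear_tlift (tmap_linear lin_id hR)); setoid_rewrite (tmapE lin_id hR).
rewrite (linear_tlift tassocV_linear); setoid_rewrite tassocVE.
rewrite (linear_tlift (tmap_linear hmA hB)).
setoid_rewrite (linear_tlift (tmap_linear hmA hB)).
setoid_rewrite (tmapE hmA hB).
by setoid_rewrite (tmulE bA).
Qed.

Lemma twisting_mulB_rhsE b b' a :
  tmap alA (tmul muB)
    (tassoc (tmap R id (tassocV (tmap id R (tassoc ((b \ot b') \ot a))))))
  = tlift (fun u v => tlift (fun x y => alA x \ot muB y v) (R (b \ot u)))
      (R (b' \ot a)).
Proof.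
rewrite tassocE3 tmapE // tassocVE.
rewrite (linear_tlift (tmap_linear hR lin_id)); setoid_rewrite (tmapE hR lin_id).
rewrite (linear_tlift tassoc_linear); setoid_rewrite tassocE.
rewrite (linear_tlift (tmap_linear hA hmB)).
setoid_rewrite (linear_tlift (tmap_linear hA hmB)).
setoid_rewrite (tmapE hA hmB).
by setoid_rewrite (tmulE bB).
Qed.

Lemma HomTwistingP : HomTwisting muA alA muB alB R <->
  [/\ forall b a, tmap alA alB (R (b \ot a)) = R (alB b \ot alA a),
      forall b a a', R (alB b \ot muA a a') =
        tlift (fun u v => tlift (fun x y => muA u x \ot alB y) (R (v \ot a')))
          (R (b \ot a)) &
      forall b b' a, R (muB b b' \ot alA a) =
        tlift (fun u v => tlift (fun x y => alA x \ot muB y v) (R (b \ot u)))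
          (R (b' \ot a))].
Proof.
split.
- case=> _ Hal HmA HmB; split=> [b a|b a a'|b b' a].
  + by have := congr1 (fun f => f (b \ot a)) Hal; rewrite /= tmapE.
  + have := congr1 (fun f => f (b \ot (a \ot a'))) HmA.
    by rewrite /= twisting_mulA_rhsE tmapE // tmulE.
  + have := congr1 (fun f => f ((b \ot b') \ot a)) HmB.
    by rewrite /= twisting_mulB_rhsE tmapE // tmulE.
- case=> Hal HmA HmB; split => //; apply/funext.
  + apply: tensor_ext => [||b a]; try linearity.
    by rewrite /= tmapE.
  + apply: tensor_ext3r => [||b a a']; try linearity.
    by rewrite /= twisting_mulA_rhsE tmapE // tmulE.
  + apply: tensor_ext3l => [||b b' a]; try linearity.
    by rewrite /= twisting_mulB_rhsE tmapE // tmulE.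
Qed.

Section LiftThroughTwisting.
Hypothesis HT : HomTwisting muA alA muB alB R.
Variables (W : lmodType k) (F : A -> B -> W).
Hypothesis bF : bilin F.

Let hF : linear (tlift F). Proof. exact: tlift_linear. Qed.

Lemma tlift_twist_alpha b a :
  tlift F (R (alB b \ot alA a)) = tlift (fun x y => F (alA x) (alB y)) (R (b \ot a)).
Proof.
have [Hal _ _] := (HomTwistingP.1 HT).
by rewrite -Hal /tmap (linear_tlift hF); setoid_rewrite (tliftE bF).
Qed.

Lemma tlift_twist_mulA b a a' :
  tlift F (R (alB b \ot muA a a')) =
  tlift (fun u v => tlift (fun x y => F (muA u x) (alB y)) (R (v \ot a')))
    (R (b \ot a)).
Proof.
have [_ HmA _] := (HomTwistingP.1 HT).
rewrite HmA (linear_tlift hF); setoid_rewrite (linear_tlift hF).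
by setoid_rewrite (tliftE bF).
Qed.

Lemma tlift_twist_mulB b b' a :
  tlift F (R (muB b b' \ot alA a)) =
  tlift (fun u v => tlift (fun x y => F (alA x) (muB y v)) (R (b \ot u)))
    (R (b' \ot a)).
Proof.
have [_ _ HmB] := (HomTwistingP.1 HT).
rewrite HmB (linear_tlift hF); setoid_rewrite (linear_tlift hF).
by setoid_rewrite (tliftE bF).
Qed.

End LiftThroughTwisting.

End HomTwistingLaws.

Section BraidRelation.
Variables (k : fieldType) (A B C : lmodType k).
Variables (R1 : B \otimes A -> A \otimes B) (R2 : C \otimes B -> B \otimes C)
  (R3 : C \otimes A -> A \otimes C).
Hypotheses (h1 : linear R1) (h2 : linear R2) (h3 : linear R3).
Hypothesis braid :
  tmap id R2 \o tassoc \o tmap R3 id \o tassocV \o tmap id R1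
    = tassoc \o tmap R1 id \o tassocV \o tmap id R3 \o tassoc
        \o tmap R2 id \o tassocV.

Lemma braid_pointwise c b a :
  tlift (fun a1 b1 => tlift (fun a2 c2 => tlift (fun b3 c3 => a2 \ot (b3 \ot c3))
          (R2 (c2 \ot b1))) (R3 (c \ot a1))) (R1 (b \ot a)) =
  tlift (fun b1 c1 => tlift (fun a2 c2 => tlift (fun a3 b3 => a3 \ot (b3 \ot c2))
          (R1 (b1 \ot a2))) (R3 (c1 \ot a))) (R2 (c \ot b)).
Proof.
have tensr_tlift x (t : B \otimes C) : tlift (fun b c => x \ot (b \ot c)) t = x \ot t.
  by rewrite -{2}(tlift_tens t) (linear_tlift (tens_linr x)).
have := congr1 (fun f => f (c \ot (b \ot a))) braid; rewrite /=.
rewrite tmapE // tassocVE (linear_tlift (tmap_linear h3 lin_id)).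
setoid_rewrite (tmapE h3 lin_id).
rewrite (linear_tlift tassoc_linear); setoid_rewrite tassocE.
rewrite (linear_tlift (tmap_linear lin_id h2)).
setoid_rewrite (linear_tlift (tmap_linear lin_id h2)).
setoid_rewrite (tmapE lin_id h2).
rewrite tassocVE3 tmapE // tassocE (linear_tlift (tmap_linear lin_id h3)).
setoid_rewrite (tmapE lin_id h3).
rewrite (linear_tlift tassocV_linear); setoid_rewrite tassocVE.
rewrite (linear_tlift (tmap_linear h1 lin_id)).
setoid_rewrite (linear_tlift (tmap_linear h1 lin_id)).
setoid_rewrite (tmapE h1 lin_id).
rewrite (linear_tlift tassoc_linear); setoid_rewrite (linear_tlift tassoc_linear).
setoid_rewrite tassocE.
by rewrite /id; setoid_rewrite tensr_tlift.
Qed.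

Lemma tlift_braid (W : lmodType k) (H : A -> B -> C -> W) :
  (forall a b, linear (H a b)) -> (forall a c, linear (fun b => H a b c)) ->
  (forall b c, linear (fun a => H a b c)) -> forall c b a,
  tlift (fun a1 b1 => tlift (fun a2 c2 => tlift (fun b3 c3 => H a2 b3 c3)
          (R2 (c2 \ot b1))) (R3 (c \ot a1))) (R1 (b \ot a)) =
  tlift (fun b1 c1 => tlift (fun a2 c2 => tlift (fun a3 b3 => H a3 b3 c2)
          (R1 (b1 \ot a2))) (R3 (c1 \ot a))) (R2 (c \ot b)).
Proof.
move=> H1 H2 H3 c b a.
pose G x (s : B \otimes C) := tlift (H x) s.
have bHx x : bilin (H x) by split=> ?; [apply: H1 | apply: H2].
have bG : bilin G.
  split => [x|s]; first exact: tlift_linear.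
  by apply: (tlift_linear_param (F := H)) => y z; apply: H3.
have GE x y z : tlift G (x \ot (y \ot z)) = H x y z.
  by rewrite (tliftE bG) /G (tliftE (bHx x)).
have := congr1 (tlift G) (braid_pointwise c b a).
rewrite !(linear_tlift (tlift_linear bG)).
do 2 setoid_rewrite (linear_tlift (tlift_linear bG)).
by setoid_rewrite GE.
Qed.

End BraidRelation.

Section TwistedTensorProduct.
Variables (k : fieldType) (A B : lmodType k).
Variables (muA : A -> A -> A) (muB : B -> B -> B) (R : B \otimes A -> A \otimes B).
Hypotheses (bA : bilin muA) (bB : bilin muB) (hR : linear R).

Lemma twisted_mul_bilin : bilin (twisted_mul muA muB R).
Proof. rewrite /twisted_mul; bilinearity. Qed.

Lemma twisted_mulE a b a' b' :
  twisted_mul muA muB R (a \ot b) (a' \ot b') =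
  tlift (fun x y => muA a x \ot muB y b') (R (b \ot a')).
Proof. by rewrite /twisted_mul !tliftE //; bilinearity. Qed.

End TwistedTensorProduct.

Section IteratedTwistedProducts.
Variables (k : fieldType) (A B C : lmodType k).
Variables (muA : A -> A -> A) (alA : A -> A) (muB : B -> B -> B) (alB : B -> B)
  (muC : C -> C -> C) (alC : C -> C).
Variables (R1 : B \otimes A -> A \otimes B) (R2 : C \otimes B -> B \otimes C)
  (R3 : C \otimes A -> A \otimes C).
Hypotheses (bA : bilin muA) (bB : bilin muB) (bC : bilin muC).
Hypotheses (hA : linear alA) (hB : linear alB) (hC : linear alC).
Hypotheses (HT1 : HomTwisting muA alA muB alB R1)
  (HT2 : HomTwisting muB alB muC alC R2) (HT3 : HomTwisting muA alA muC alC R3).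
Hypothesis braid :
  tmap id R2 \o tassoc \o tmap R3 id \o tassocV \o tmap id R1
    = tassoc \o tmap R1 id \o tassocV \o tmap id R3 \o tassoc
        \o tmap R2 id \o tassocV.

Definition twistAB_C : C \otimes (A \otimes B) -> (A \otimes B) \otimes C :=
  tassocV \o tmap id R2 \o tassoc \o tmap R3 id \o tassocV.
Definition twistA_BC : (B \otimes C) \otimes A -> A \otimes (B \otimes C) :=
  tassoc \o tmap R1 id \o tassocV \o tmap id R3 \o tassoc.

Let h1 : linear R1. Proof. by case: HT1. Qed.
Let h2 : linear R2. Proof. by case: HT2. Qed.
Let h3 : linear R3. Proof. by case: HT3. Qed.

Let R1_alpha := tlift_twist_alpha bA bB hA hB h1 HT1.
Let R2_alpha := tlift_twist_alpha bB bC hB hC h2 HT2.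
Let R3_alpha := tlift_twist_alpha bA bC hA hC h3 HT3.
Let R1_mulA := tlift_twist_mulA bA bB hA hB h1 HT1.
Let R1_mulB := tlift_twist_mulB bA bB hA hB h1 HT1.
Let R2_mulA := tlift_twist_mulA bB bC hB hC h2 HT2.
Let R2_mulB := tlift_twist_mulB bB bC hB hC h2 HT2.
Let R3_mulA := tlift_twist_mulA bA bC hA hC h3 HT3.
Let R3_mulB := tlift_twist_mulB bA bC hA hC h3 HT3.

Let bAB := twisted_mul_bilin bA bB h1.
Let bBC := twisted_mul_bilin bB bC h2.

Let braidC := tlift_braid h1 h2 h3 braid.

Lemma twistAB_C_linear : linear twistAB_C.
Proof. rewrite /twistAB_C; linearity. Qed.

Lemma twistA_BC_linear : linear twistA_BC.
Proof. rewrite /twistA_BC; linearity. Qed.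

Let htwistAB_C := twistAB_C_linear.
Let htwistA_BC := twistA_BC_linear.

Lemma twistAB_CE c a b : twistAB_C (c \ot (a \ot b)) =
  tlift (fun a1 c1 => tlift (fun b2 c2 => (a1 \ot b2) \ot c2) (R2 (c1 \ot b)))
    (R3 (c \ot a)).
Proof.
rewrite /twistAB_C /= tassocVE3 tmapE // tassocE (linear_tlift (tmap_linear lin_id h2)).
setoid_rewrite (tmapE lin_id h2).
rewrite (linear_tlift tassocV_linear); setoid_rewrite tassocVE; by [].
Qed.

Lemma twistA_BCE b c a : twistA_BC ((b \ot c) \ot a) =
  tlift (fun a1 c1 => tlift (fun a2 b2 => a2 \ot (b2 \ot c1)) (R1 (b \ot a1)))
    (R3 (c \ot a)).
Proof.
rewrite /twistA_BC /= tassocE3 tmapE // tassocVE (linear_tlift (tmap_linear h1 lin_id)).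
setoid_rewrite (tmapE h1 lin_id).
rewrite (linear_tlift tassoc_linear); setoid_rewrite tassocE; by [].
Qed.

Lemma twistAB_C_alpha c t :
  tmap (twisted_alpha alA alB) alC (twistAB_C (c \ot t))
  = twistAB_C (alC c \ot twisted_alpha alA alB t).
Proof.
move: t; apply: tensor_ext => [||a b]; try linearity.
rewrite /twisted_alpha tmapE // !twistAB_CE (linear_tlift (tmap_linear _ hC)); try linearity.
setoid_rewrite (linear_tlift (tmap_linear _ hC)); try linearity.
rewrite R3_alpha; try bilinearity.
apply: tlift_ext => x y; rewrite R2_alpha; try bilinearity.
by apply: tlift_ext => u v; rewrite !tmapE //; linearity.
Qed.

Lemma twistAB_C_mulAB c t t' :
  twistAB_C (alC c \ot twisted_mul muA muB R1 t t') =
  tlift (fun u v => tlift (fun x y => twisted_mul muA muB R1 u x \ot alC y)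
    (twistAB_C (v \ot t'))) (twistAB_C (c \ot t)).
Proof.
move: t'; apply: tensor_ext => [||a' b']; try linearity.
move: t; apply: tensor_ext => [||a b]; try linearity.
rewrite twisted_mulE // (linear_tlift (lin_comp htwistAB_C (tens_linr _))).
setoid_rewrite twistAB_CE.
setoid_rewrite R3_mulA; try bilinearity.
setoid_rewrite R2_mulA; try bilinearity.
rewrite tlift_exchange [RHS]tlift_tlift; try bilinearity.
apply: tlift_ext => u v.
rewrite braidC; try (intros ? ?; linearity).
rewrite tlift_tlift; try bilinearity.
apply: tlift_ext => b2 c2.
rewrite tliftE; try bilinearity.
rewrite tlift_tlift; try bilinearity.
apply: tlift_ext => a3 c3.
rewrite tlift_tlift; try bilinearity.
rewrite tlift_exchange; apply: tlift_ext => b4 c4.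
rewrite tliftE; try bilinearity.
by rewrite twisted_mulE // (linear_tlift (tens_linl _)).
Qed.

Lemma twistAB_C_mulC c c' t :
  twistAB_C (muC c c' \ot twisted_alpha alA alB t) =
  tlift (fun u v => tlift (fun x y => twisted_alpha alA alB x \ot muC y v)
    (twistAB_C (c \ot u))) (twistAB_C (c' \ot t)).
Proof.
move: t; apply: tensor_ext => [||a b]; try linearity.
rewrite /twisted_alpha tmapE // !twistAB_CE.
rewrite R3_mulB; try bilinearity.
rewrite tlift_tlift; try bilinearity.
apply: tlift_ext => u v.
setoid_rewrite R2_mulB; try bilinearity.
rewrite tlift_tlift; try bilinearity.
rewrite tlift_exchange; apply: tlift_ext => p q.
rewrite tliftE; try bilinearity.
rewrite twistAB_CE tlift_tlift; try bilinearity.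
apply: tlift_ext => x y.
rewrite tlift_tlift; try bilinearity.
apply: tlift_ext => r s.
rewrite tliftE; try bilinearity.
by rewrite tmapE.
Qed.

Lemma twistA_BC_alpha s a :
  tmap alA (twisted_alpha alB alC) (twistA_BC (s \ot a))
  = twistA_BC (twisted_alpha alB alC s \ot alA a).
Proof.
move: s; apply: tensor_ext => [||b c]; try linearity.
rewrite /twisted_alpha tmapE // !twistA_BCE (linear_tlift (tmap_linear hA _)); try linearity.
setoid_rewrite (linear_tlift (tmap_linear hA _)); try linearity.
rewrite R3_alpha; try bilinearity.
apply: tlift_ext => x y; rewrite R1_alpha; try bilinearity.
by apply: tlift_ext => u v; rewrite !tmapE //; linearity.
Qed.

Lemma twistA_BC_mulA s a a' :
  twistA_BC (twisted_alpha alB alC s \ot muA a a') =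
  tlift (fun u v => tlift (fun x y => muA u x \ot twisted_alpha alB alC y)
    (twistA_BC (v \ot a'))) (twistA_BC (s \ot a)).
Proof.
move: s; apply: tensor_ext => [||b c]; try linearity.
rewrite /twisted_alpha tmapE // !twistA_BCE.
rewrite R3_mulA; try bilinearity.
rewrite tlift_tlift; try bilinearity.
apply: tlift_ext => u v.
setoid_rewrite R1_mulA; try bilinearity.
rewrite tlift_tlift; try bilinearity.
rewrite tlift_exchange; apply: tlift_ext => p q.
rewrite tliftE; try bilinearity.
rewrite twistA_BCE tlift_tlift; try bilinearity.
apply: tlift_ext => x y.
rewrite tlift_tlift; try bilinearity.
apply: tlift_ext => r s.
rewrite tliftE; try bilinearity.
by rewrite tmapE.
Qed.

Lemma twistA_BC_mulBC s s' a :
  twistA_BC (twisted_mul muB muC R2 s s' \ot alA a) =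
  tlift (fun u v => tlift (fun x y => alA x \ot twisted_mul muB muC R2 y v)
    (twistA_BC (s \ot u))) (twistA_BC (s' \ot a)).
Proof.
move: s'; apply: tensor_ext => [||b' c']; try linearity.
move: s; apply: tensor_ext => [||b c]; try linearity.
rewrite twisted_mulE // (linear_tlift (lin_comp htwistA_BC (tens_linl _))).
setoid_rewrite twistA_BCE.
setoid_rewrite R3_mulB; try bilinearity.
setoid_rewrite R1_mulB; try bilinearity.
rewrite tlift_exchange [RHS]tlift_tlift; try bilinearity.
apply: tlift_ext => u v.
rewrite -braidC; try (intros ? ?; linearity).
rewrite tlift_tlift; try bilinearity.
apply: tlift_ext => a1 b1.
rewrite tliftE; try bilinearity.
rewrite tlift_tlift; try bilinearity.
apply: tlift_ext => x y.
rewrite tlift_tlift; try bilinearity.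
rewrite tlift_exchange; apply: tlift_ext => r s.
rewrite tliftE; try bilinearity.
by rewrite twisted_mulE // (linear_tlift (tens_linr _)).
Qed.

Lemma twistAB_C_twisting :
  HomTwisting (twisted_mul muA muB R1) (twisted_alpha alA alB) muC alC twistAB_C.
Proof.
apply/(HomTwistingP bAB bC (tmap_linear hA hB) hC htwistAB_C).
by split; [exact: twistAB_C_alpha | exact: twistAB_C_mulAB | exact: twistAB_C_mulC].
Qed.

Lemma twistA_BC_twisting :
  HomTwisting muA alA (twisted_mul muB muC R2) (twisted_alpha alB alC) twistA_BC.
Proof.
apply/(HomTwistingP bA bBC hA (tmap_linear hB hC) htwistA_BC).
by split; [exact: twistA_BC_alpha | exact: twistA_BC_mulA | exact: twistA_BC_mulBC].
Qed.

Lemma twisted_mul_tassoc (x y : (A \otimes B) \otimes C) :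
  tassoc (twisted_mul (twisted_mul muA muB R1) muC twistAB_C x y)
  = twisted_mul muA (twisted_mul muB muC R2) twistA_BC (tassoc x) (tassoc y).
Proof.
have bABC := twisted_mul_bilin bAB bC htwistAB_C.
have bA_BC := twisted_mul_bilin bA bBC htwistA_BC.
move: y; apply: tensor_ext3l => [||a' b' c']; try linearity.
move: x; apply: tensor_ext3l => [||a b c]; try linearity.
rewrite !tassocE3 !twisted_mulE // twistAB_CE twistA_BCE.
rewrite !tlift_tlift; try bilinearity.
rewrite (linear_tlift tassoc_linear); apply: tlift_ext => a1 c1.
rewrite !tlift_tlift; try bilinearity.
rewrite (linear_tlift tassoc_linear).
setoid_rewrite tliftE; try bilinearity.
setoid_rewrite (twisted_mulE bA bB h1); setoid_rewrite (twisted_mulE bB bC h2).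
setoid_rewrite (linear_tlift (tens_linl _)).
setoid_rewrite (linear_tlift tassoc_linear); setoid_rewrite tassocE3.
setoid_rewrite (linear_tlift (tens_linr _)).
exact: tlift_exchange.
Qed.

Lemma twisted_alpha_tassoc :
  tassoc \o twisted_alpha (twisted_alpha alA alB) alC
  = twisted_alpha alA (twisted_alpha alB alC) \o tassoc.
Proof.
apply/funext; apply: tensor_ext3l => [||a b c]; try linearity.
rewrite /= /twisted_alpha tassocE3 !tmapE ?tassocE3 //; linearity.
Qed.

End IteratedTwistedProducts.

Theorem theorem2p13 (k : fieldType) (A B C : lmodType k)
  (muA : A -> A -> A) (alA : A -> A)
  (muB : B -> B -> B) (alB : B -> B)
  (muC : C -> C -> C) (alC : C -> C)
  (R1 : B \otimes A -> A \otimes B)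
  (R2 : C \otimes B -> B \otimes C)
  (R3 : C \otimes A -> A \otimes C) :
  HomAssoc muA alA -> HomAssoc muB alB -> HomAssoc muC alC ->
  HomTwisting muA alA muB alB R1 ->
  HomTwisting muB alB muC alC R2 ->
  HomTwisting muA alA muC alC R3 ->
  tmap id R2 \o tassoc \o tmap R3 id \o tassocV \o tmap id R1
    = tassoc \o tmap R1 id \o tassocV \o tmap id R3 \o tassoc
        \o tmap R2 id \o tassocV ->
  let P1 : C \otimes (A \otimes B) -> (A \otimes B) \otimes C :=
    tassocV \o tmap id R2 \o tassoc \o tmap R3 id \o tassocV in
  let P2 : (B \otimes C) \otimes A -> A \otimes (B \otimes C) :=
    tassoc \o tmap R1 id \o tassocV \o tmap id R3 \o tassoc in
  [/\ HomTwisting (twisted_mul muA muB R1) (twisted_alpha alA alB) muC alC P1,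
      HomTwisting muA alA (twisted_mul muB muC R2) (twisted_alpha alB alC) P2,
      (forall x y : (A \otimes B) \otimes C,
         tassoc (twisted_mul (twisted_mul muA muB R1) muC P1 x y)
         = twisted_mul muA (twisted_mul muB muC R2) P2 (tassoc x) (tassoc y)) &
      tassoc \o twisted_alpha (twisted_alpha alA alB) alC
        = twisted_alpha alA (twisted_alpha alB alC) \o tassoc].
Proof.
move=> [mA1 mA2 hA _ _] [mB1 mB2 hB _ _] [mC1 mC2 hC _ _] HT1 HT2 HT3 braid P1 P2.
have bA : bilin muA by split.
have bB : bilin muB by split.
have bC : bilin muC by split.
split.
- exact: twistAB_C_twisting bA bB bC hA hB hC HT1 HT2 HT3 braid.
- exact: twistA_BC_twisting bA bB bC hA hB hC HT1 HT2 HT3 braid.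
- exact: twisted_mul_tassoc bA bB bC HT1 HT2 HT3.
- exact: twisted_alpha_tassoc hA hB hC.
Qed.
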